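(* For every $(w_1,w_2)\in\mathcal A$, with $c_i=c_i(w_1,w_2)$, $$e^{c_i}\int_\Omega e^{u_i^0+w_i}\,dx\le|\Omega|\quad\text{and}\quad e^{c_i}\le1,\qquad i=1,2.$$
   Context: Standing setting (doubly periodic case): $N\ge2$ integer, $\kappa>1$, $\lambda>0$; $\Omega$ a doubly periodic domain (flat torus) of area $|\Omega|$; integers $n_1,n_2\ge0$ and points $p_{is}\in\Omega$. $\dot W^{1,2}(\Omega)=\{w\in W^{1,2}(\Omega):\int_\Omega w=0\}$ (periodic functions). $u_i^0$ solves $\Delta u_i^0=4\pi\sum_{s=1}^{n_i}\delta_{p_{is}}-\frac{4\pi n_i}{|\Omega|}$, $\int_\Omega u_i^0=0$. $b_1=\frac{4\pi((1+(N-1)\kappa)n_1+(\kappa-1)n_2)}{\kappa}$, $b_2=\frac{4\pi((N-1)(\kappa-1)n_1+(N-1+\kappa)n_2)}{(N-1)\kappa}$. $\mathcal A$ is the set of $(w_1,w_2)\in\dot W^{1,2}(\Omega)^2$ with $(\int_\Omega e^{u_1^0+w_1})^2\ge\frac{4(N-1+\kappa)b_1}{N^2\lambda}\int_\Omega e^{2u_1^0+2w_1}$ and $(\int_\Omega e^{u_2^0+w_2})^2\ge\frac{4(N-1)(1+(N-1)\kappa)b_2}{N^2\lambda}\int_\Omega e^{2u_2^0+2w_2}$. For $(w_1,w_2)\in\mathcal A$, $(c_1(w_1,w_2),c_2(w_1,w_2))$ is the unique pair of reals such that $e^{c_1}=f_1(e^{c_2})$, $e^{c_2}=f_2(e^{c_1})$,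 where with $E_{12}=\int_\Omega e^{u_1^0+u_2^0+w_1+w_2}$, $P_1(Y)=N\int_\Omega e^{u_1^0+w_1}+(\kappa-1)YE_{12}$, $P_2(X)=\frac N{N-1}\int_\Omega e^{u_2^0+w_2}+(\kappa-1)XE_{12}$, $f_1(Y)=\frac{P_1(Y)+\sqrt{P_1(Y)^2-\frac{4(N-1+\kappa)b_1}{\lambda}\int e^{2u_1^0+2w_1}}}{2(N-1+\kappa)\int e^{2u_1^0+2w_1}}$, $f_2(X)=\frac{P_2(X)+\sqrt{P_2(X)^2-\frac{4(1+(N-1)\kappa)b_2}{(N-1)\lambda}\int e^{2u_2^0+2w_2}}}{2(\frac1{N-1}+\kappa)\int e^{2u_2^0+2w_2}}$ (this pair exists and is unique). *)

From HB Require Import structures.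
From mathcomp Require Import all_boot all_order all_algebra.
From mathcomp Require Import all_classical all_reals all_analysis.
Set Implicit Arguments. Unset Strict Implicit. Unset Printing Implicit Defensive.
Import Order.TTheory GRing.Theory Num.Theory.
Import numFieldNormedType.Exports.
Local Open Scope classical_set_scope.
Local Open Scope ring_scope.

Section Torus.
Variable R : realType.

Definition pt := (R * R)%type.

Definition leb2 := ((@lebesgue_measure R) \x (@lebesgue_measure R))%E.

Definition e1 : pt := (1, 0).
Definition e2 : pt := (0, 1).

Definition lattice_basis (om1 om2 : pt) : Prop :=
  om1.1 * om2.2 - om1.2 * om2.1 != 0.

(* Fundamental parallelogram of the lattice: the torus Omega. *)
Definition fdom (om1 om2 : pt) : set pt :=
  [set x | exists s t : R, [/\ 0 <= s < 1, 0 <= t < 1 &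
            x = (s * om1.1 + t * om2.1, s * om1.2 + t * om2.2)]].

Definition area (om1 om2 : pt) : R := fine (leb2 (fdom om1 om2)).

Definition intO (om1 om2 : pt) (f : pt -> R) : R :=
  Rintegral leb2 (fdom om1 om2) f.

Definition periodic (om1 om2 : pt) (f : pt -> R) : Prop :=
  forall x, f (x + om1) = f x /\ f (x + om2) = f x.

Fixpoint iter_dir (vs : seq pt) (f : pt -> R) : pt -> R :=
  match vs with
  | [::] => f
  | v :: vs' => 'D_v (iter_dir vs' f)
  end.

Definition smooth (f : pt -> R) : Prop :=
  forall (vs : seq pt) (x : pt), differentiable (iter_dir vs f) x.

Definition test_fun (om1 om2 : pt) (phi : pt -> R) : Prop :=
  smooth phi /\ periodic om1 om2 phi.

Definition laplacian (phi : pt -> R) : pt -> R :=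
  fun x => 'D_e1 ('D_e1 phi) x + 'D_e2 ('D_e2 phi) x.

Definition L2O (om1 om2 : pt) (g : pt -> R) : Prop :=
  periodic om1 om2 g /\ measurable_fun (fdom om1 om2) g /\
  leb2.-integrable (fdom om1 om2) (fun x => (g x ^+ 2)%:E).

Definition W12 (om1 om2 : pt) (w : pt -> R) : Prop :=
  L2O om1 om2 w /\
  exists g1 g2 : pt -> R, L2O om1 om2 g1 /\ L2O om1 om2 g2 /\
    forall phi, test_fun om1 om2 phi ->
      intO om1 om2 (fun x => w x * 'D_e1 phi x) = - intO om1 om2 (fun x => g1 x * phi x) /\
      intO om1 om2 (fun x => w x * 'D_e2 phi x) = - intO om1 om2 (fun x => g2 x * phi x).

Definition W12dot (om1 om2 : pt) (w : pt -> R) : Prop :=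
  W12 om1 om2 w /\ intO om1 om2 w = 0.

(* u is the (mean zero) distributional solution of
   Delta u = 4 pi sum_{s<n} delta_{p s} - 4 pi n / |Omega| on the torus. *)
Definition is_u0 (om1 om2 : pt) (n : nat) (p : 'I_n -> pt) (u : pt -> R) : Prop :=
  periodic om1 om2 u /\ measurable_fun (fdom om1 om2) u /\
  leb2.-integrable (fdom om1 om2) (fun x => (u x)%:E) /\
  intO om1 om2 u = 0 /\
  forall phi, test_fun om1 om2 phi ->
    intO om1 om2 (fun x => u x * laplacian phi x) =
      4 * pi * (\sum_(s < n) phi (p s))
      - 4 * pi * n%:R / area om1 om2 * intO om1 om2 phi.

Definition b1 (N : nat) (kappa : R) (n1 n2 : nat) : R :=
  4 * pi * ((1 + (N%:R - 1) * kappa) * n1%:R + (kappa - 1) * n2%:R) / kappa.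

Definition b2 (N : nat) (kappa : R) (n1 n2 : nat) : R :=
  4 * pi * ((N%:R - 1) * (kappa - 1) * n1%:R + (N%:R - 1 + kappa) * n2%:R)
    / ((N%:R - 1) * kappa).

Section Data.
Variables (N : nat) (kappa lambda : R) (om1 om2 : pt) (n1 n2 : nat)
          (u10 u20 w1 w2 : pt -> R).

Definition I1 := intO om1 om2 (fun x => expR (u10 x + w1 x)).
Definition I2 := intO om1 om2 (fun x => expR (u20 x + w2 x)).
Definition J1 := intO om1 om2 (fun x => expR (2 * u10 x + 2 * w1 x)).
Definition J2 := intO om1 om2 (fun x => expR (2 * u20 x + 2 * w2 x)).
Definition E12 := intO om1 om2 (fun x => expR (u10 x + u20 x + w1 x + w2 x)).

Definition in_A : Prop :=
  W12dot om1 om2 w1 /\ W12dot om1 om2 w2 /\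
  I1 ^+ 2 >= 4 * (N%:R - 1 + kappa) * b1 N kappa n1 n2 / (N%:R ^+ 2 * lambda) * J1 /\
  I2 ^+ 2 >= 4 * (N%:R - 1) * (1 + (N%:R - 1) * kappa) * b2 N kappa n1 n2
               / (N%:R ^+ 2 * lambda) * J2.

Definition P1 (Y : R) : R := N%:R * I1 + (kappa - 1) * Y * E12.
Definition P2 (X : R) : R := N%:R / (N%:R - 1) * I2 + (kappa - 1) * X * E12.

Definition f1 (Y : R) : R :=
  (P1 Y + Num.sqrt (P1 Y ^+ 2 - 4 * (N%:R - 1 + kappa) * b1 N kappa n1 n2 / lambda * J1))
  / (2 * (N%:R - 1 + kappa) * J1).

Definition f2 (X : R) : R :=
  (P2 X + Num.sqrt (P2 X ^+ 2 - 4 * (1 + (N%:R - 1) * kappa) * b2 N kappa n1 n2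
                                   / ((N%:R - 1) * lambda) * J2))
  / (2 * ((N%:R - 1)^-1 + kappa) * J2).

Definition is_c (c1 c2 : R) : Prop :=
  expR c1 = f1 (expR c2) /\ expR c2 = f2 (expR c1).

End Data.
End Torus.

From HB Require Import structures.
From mathcomp Require Import all_boot all_order all_algebra.
From mathcomp Require Import all_classical all_reals all_analysis.
From mathcomp Require Import measurable_realfun ring lra.
Set Implicit Arguments. Unset Strict Implicit. Unset Printing Implicit Defensive.
Import Order.TTheory GRing.Theory Num.Theory.
Local Open Scope classical_set_scope.
Local Open Scope ring_scope.

(* Write X = e^c1, Y = e^c2, A = |Omega|, I_i = int e^(u_i^0 + w_i),
   J_i = int e^(2 (u_i^0 + w_i)) and E = int e^(u_1^0 + u_2^0 + w_1 + w_2).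
   As the larger root of its quadratic, X satisfies (N-1+kappa) J1 X <= N I1 + (kappa-1) Y E,
   and symmetrically for Y.  Cauchy-Schwarz (I_i <= sqrt A sqrt J_i, E <= sqrt J1 sqrt J2)
   turns these two inequalities into a linear system in s = sqrt J1 X, t = sqrt J2 Y whose
   matrix is an M-matrix, so s, t <= sqrt A and X I1 <= sqrt A s <= A.
   Jensen (e^x >= 1 + x, with int (u_i^0 + w_i) = 0) gives A <= I_i, hence X, Y <= 1. *)

Section RealAlgebra.
Variable R : rcfType.
Implicit Types A I J P X Y a c j k n s t : R.

Lemma le_sqrt_mul_of_quadratic_ge0 A I J : 0 <= A -> 0 <= J ->
  (forall m, 0 <= A - 2 * m * I + m ^+ 2 * J) -> I <= Num.sqrt A * Num.sqrt J.
Proof.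
move=> A_ge0 J_ge0 q_ge0.
have [I_gt0|I_le0] := ltP 0 I; last first.
  by apply: le_trans I_le0 _; rewrite mulr_ge0 ?sqrtr_ge0.
have [J_gt0|J_le0] := ltP 0 J; last first.
  have J0 : J = 0 by apply/eqP; rewrite eq_le J_le0 J_ge0.
  have := q_ge0 ((A + 1) / (2 * I)); rewrite J0 mulr0 addr0.
  have -> : 2 * ((A + 1) / (2 * I)) * I = A + 1 by field; rewrite gt_eqF.
  lra.
have := mulr_ge0 (q_ge0 (I / J)) (ltW J_gt0).
have -> : (A - 2 * (I / J) * I + (I / J) ^+ 2 * J) * J = A * J - I ^+ 2.
  by field; rewrite gt_eqF.
rewrite subr_ge0 -sqrtrM // => /ler_wsqrtr.
by rewrite sqrtr_sqr ger0_norm // ltW.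
Qed.

Lemma mul_larger_root_le a J P c X : 0 < a -> 0 < J -> 0 <= P -> 0 <= c ->
  X = (P + Num.sqrt (P ^+ 2 - c)) / (2 * a * J) -> a * J * X <= P.
Proof.
move=> a_gt0 J_gt0 P_ge0 c_ge0 ->.
have : Num.sqrt (P ^+ 2 - c) <= P.
  rewrite -[leRHS](ger0_norm P_ge0) -sqrtr_sqr; apply: ler_wsqrtr; lra.
have -> : a * J * ((P + Num.sqrt (P ^+ 2 - c)) / (2 * a * J)) =
          (P + Num.sqrt (P ^+ 2 - c)) / 2.
  by field; rewrite !gt_eqF.
lra.
Qed.

(* The matrix [[n-1+k, 1-k], [(1-n)(k-1), 1+(n-1)k]] has determinant k n^2 > 0 and
   a nonnegative inverse, and it maps (1, 1) to (n, n). *)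
Lemma le_of_coupled_le n k a s t : 2 <= n -> 1 < k ->
  (n - 1 + k) * s <= n * a + (k - 1) * t ->
  (1 + (n - 1) * k) * t <= n * a + (n - 1) * (k - 1) * s ->
  s <= a /\ t <= a.
Proof.
move=> n_ge2 k_gt1 hs ht.
have c1 : 0 <= 1 + (n - 1) * k by nra.
have c2 : 0 <= (n - 1) * (k - 1) by nra.
have c3 : 0 <= k - 1 by lra.
have c4 : 0 <= n - 1 + k by lra.
have hs1 := ler_wpM2l c1 hs; have ht1 := ler_wpM2l c3 ht.
have hs2 := ler_wpM2l c2 hs; have ht2 := ler_wpM2l c4 ht.
have det_gt0 : 0 < k * n ^+ 2 by nra.
by split; rewrite -(ler_pM2l det_gt0); nra.
Qed.

Lemma coupled_roots_le n k A I1 I2 J1 J2 E X Y :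
  2 <= n -> 1 < k -> 0 <= A -> 0 < J1 -> 0 < J2 -> 0 <= E -> 0 <= X -> 0 <= Y ->
  I1 <= Num.sqrt A * Num.sqrt J1 -> I2 <= Num.sqrt A * Num.sqrt J2 ->
  E <= Num.sqrt J1 * Num.sqrt J2 ->
  (n - 1 + k) * J1 * X <= n * I1 + (k - 1) * Y * E ->
  ((n - 1)^-1 + k) * J2 * Y <= n / (n - 1) * I2 + (k - 1) * X * E ->
  Num.sqrt J1 * X <= Num.sqrt A /\ Num.sqrt J2 * Y <= Num.sqrt A.
Proof.
move=> n_ge2 k_gt1 A_ge0 J1_gt0 J2_gt0 E_ge0 X_ge0 Y_ge0 hI1 hI2 hE h1 h2.
have n1_gt0 : 0 < n - 1 by lra.
have {}h2 : (1 + (n - 1) * k) * J2 * Y <= n * I2 + (n - 1) * (k - 1) * X * E.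
  have := ler_wpM2l (ltW n1_gt0) h2.
  congr (_ <= _); field; exact: lt0r_neq0.
have j1_gt0 : 0 < Num.sqrt J1 by rewrite sqrtr_gt0.
have j2_gt0 : 0 < Num.sqrt J2 by rewrite sqrtr_gt0.
have a_ge0 := sqrtr_ge0 A.
rewrite -(sqr_sqrtr (ltW J1_gt0)) in h1; rewrite -(sqr_sqrtr (ltW J2_gt0)) in h2.
have kY_ge0 : 0 <= (k - 1) * Y by apply: mulr_ge0; lra.
have nkX_ge0 : 0 <= (n - 1) * (k - 1) * X by apply: mulr_ge0 => //; apply: mulr_ge0; lra.
have n_ge0 : 0 <= n by lra.
have hE1 := ler_wpM2l kY_ge0 hE; have hE2 := ler_wpM2l nkX_ge0 hE.
have nI1 := ler_wpM2l n_ge0 hI1; have nI2 := ler_wpM2l n_ge0 hI2.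
apply: (@le_of_coupled_le n k (Num.sqrt A) (Num.sqrt J1 * X) (Num.sqrt J2 * Y) n_ge2 k_gt1).
- by rewrite -(ler_pM2l j1_gt0); nra.
- by rewrite -(ler_pM2l j2_gt0); nra.
Qed.

Lemma mul_le_and_le1_of_sqrt_le A I J X : 0 <= A -> 0 < J -> 0 < X ->
  I <= Num.sqrt A * Num.sqrt J -> Num.sqrt J * X <= Num.sqrt A -> A <= I ->
  X * I <= A /\ X <= 1.
Proof.
move=> A_ge0 J_gt0 X_gt0 hI hX hA.
have j_gt0 : 0 < Num.sqrt J by rewrite sqrtr_gt0.
have a_gt0 : 0 < Num.sqrt A by apply: lt_le_trans hX; rewrite mulr_gt0.
have XI_le : X * I <= A.
  rewrite -(sqr_sqrtr A_ge0); apply: (le_trans (ler_wpM2l (ltW X_gt0) hI)).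
  by rewrite expr2 mulrCA ler_wpM2l ?(ltW a_gt0) // mulrC.
split => //.
have A_gt0 : 0 < A by rewrite -(sqr_sqrtr A_ge0) exprn_gt0.
rewrite -(ler_pM2r A_gt0) mul1r; apply: le_trans XI_le.
by rewrite ler_wpM2l // ltW.
Qed.

End RealAlgebra.

Section Integrals.
Context d (T : measurableType d) (R : realType).
Variables (mu : {measure set T -> \bar R}) (D : set T).
Hypothesis mD : measurable D.
Implicit Types f g : T -> R.

(* A non-integrable function has Rintegral [fine (+oo)] = 0. *)
Lemma integrable_of_Rintegral_neq0 f : measurable_fun D f ->
  (forall x, D x -> 0 <= f x) -> \int[mu]_(x in D) f x != 0 ->
  mu.-integrable D (EFin \o f).
Proof.
move=> mf f_ge0; rewrite /Rintegral => nz; apply/integrableP; split.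
  exact/measurable_EFinP.
rewrite (eq_integral (fun x => (f x)%:E)); last first.
  by move=> x; rewrite inE => Dx /=; rewrite ger0_norm // f_ge0.
move: nz; have : (0 <= \int[mu]_(x in D) (f x)%:E)%E.
  by apply: integral_ge0 => x Dx; rewrite lee_fin f_ge0.
by case: (\int[mu]_(x in D) (f x)%:E)%E => [r _ _| |] //=; rewrite ?ltry ?eqxx.
Qed.

Lemma integrable_mul_of_sqr f g : measurable_fun D f -> measurable_fun D g ->
  mu.-integrable D (EFin \o (fun x => f x ^+ 2)) ->
  mu.-integrable D (EFin \o (fun x => g x ^+ 2)) ->
  mu.-integrable D (EFin \o (fun x => f x * g x)).
Proof.
move=> mf mg if2 ig2; apply: le_integrable (integrableD mD if2 ig2) => //.
  exact/measurable_EFinP/measurable_funM.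
move=> x _ /=; rewrite lee_fin [leRHS]ger0_norm; last first.
  by rewrite addr_ge0 ?sqr_ge0.
rewrite normrM -[f x ^+ 2]real_normK ?num_real // -[g x ^+ 2]real_normK ?num_real //.
by have := sqr_ge0 (`|f x| - `|g x|); nra.
Qed.

Lemma Rintegral_cauchy_schwarz f g : measurable_fun D f -> measurable_fun D g ->
  mu.-integrable D (EFin \o (fun x => f x ^+ 2)) ->
  mu.-integrable D (EFin \o (fun x => g x ^+ 2)) ->
  \int[mu]_(x in D) (f x * g x) <=
    Num.sqrt (\int[mu]_(x in D) (f x ^+ 2)) * Num.sqrt (\int[mu]_(x in D) (g x ^+ 2)).
Proof.
move=> mf mg if2 ig2.
apply: le_sqrt_mul_of_quadratic_ge0; try by apply: Rintegral_ge0 => x _; exact: sqr_ge0.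
move=> m; have ifg := integrable_mul_of_sqr mf mg if2 ig2.
have ifg' : mu.-integrable D (EFin \o (fun x => - (2 * m) * (f x * g x))) :=
  integrableZl mD _ ifg.
have ig2' : mu.-integrable D (EFin \o (fun x => m ^+ 2 * g x ^+ 2)) :=
  integrableZl mD _ ig2.
have ifgs : mu.-integrable D
    (EFin \o (fun x => f x ^+ 2 + - (2 * m) * (f x * g x))) := integrableD mD if2 ifg'.
rewrite -mulNr -(RintegralZl _ mD ifg) -(RintegralZl _ mD ig2).
rewrite -(RintegralD mD if2 ifg') -(RintegralD mD ifgs ig2').
apply: Rintegral_ge0 => x _; have := sqr_ge0 (f x - m * g x).
by congr (_ <= _); ring.
Qed.

End Integrals.

Section FiniteMeasureIntegrals.
Context d (T : measurableType d) (R : realType).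
Variables (mu : {measure set T -> \bar R}) (D : set T).
Hypotheses (mD : measurable D) (muD_lty : (mu D < +oo)%E).
Implicit Types f : T -> R.

Lemma integrable_cst_lty (k : R) : mu.-integrable D (EFin \o cst k).
Proof.
apply/integrableP; split; first exact/measurable_EFinP/measurable_cst.
by rewrite (eq_integral (fun _ => `|k|%:E)) // integral_cst //= lte_mul_pinfty.
Qed.

Lemma integrable_of_sqr f : measurable_fun D f ->
  mu.-integrable D (EFin \o (fun x => f x ^+ 2)) -> mu.-integrable D (EFin \o f).
Proof.
move=> mf if2; have i1f2 := integrableD mD (integrable_cst_lty 1) if2.
apply: le_integrable i1f2 => //; first exact/measurable_EFinP.
move=> x _ /=; rewrite lee_fin [leRHS]ger0_norm; last first.
  by rewrite addr_ge0 ?sqr_ge0.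
by have := sqr_ge0 (`|f x| - 1); rewrite -[f x ^+ 2]real_normK ?num_real //; nra.
Qed.

Lemma Rintegral_le_sqrt_measure f : measurable_fun D f ->
  mu.-integrable D (EFin \o (fun x => f x ^+ 2)) ->
  \int[mu]_(x in D) f x <=
    Num.sqrt (fine (mu D)) * Num.sqrt (\int[mu]_(x in D) (f x ^+ 2)).
Proof.
move=> mf if2.
have i1 : mu.-integrable D (EFin \o (fun _ => 1 ^+ 2)).
  by rewrite expr1n; exact: integrable_cst_lty.
have := @Rintegral_cauchy_schwarz _ _ _ mu D mD (fun=> 1) f (measurable_cst _) mf i1 if2.
under eq_Rintegral do rewrite mul1r.
by rewrite expr1n Rintegral_cst // mul1r.
Qed.

Lemma Rintegral_expR_ge f : mu.-integrable D (EFin \o f) ->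
  mu.-integrable D (EFin \o (fun x => expR (f x))) ->
  fine (mu D) + \int[mu]_(x in D) f x <= \int[mu]_(x in D) expR (f x).
Proof.
move=> if_ iexpf; have i1 := integrable_cst_lty 1.
have i1f : mu.-integrable D (EFin \o (fun x => 1 + f x)) := integrableD mD i1 if_.
rewrite -[fine _]mul1r -Rintegral_cst // -(RintegralD mD i1 if_).
by apply: le_Rintegral => // x _; exact: expR_ge1Dx.
Qed.

Lemma Rintegral_expR_bounds (f : T -> R) : mu.-integrable D (EFin \o f) ->
  \int[mu]_(x in D) f x = 0 -> \int[mu]_(x in D) (expR (f x) ^+ 2) != 0 ->
  [/\ mu.-integrable D (EFin \o (fun x => expR (f x) ^+ 2)),
      fine (mu D) <= \int[mu]_(x in D) expR (f x) &
      \int[mu]_(x in D) expR (f x) <=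
        Num.sqrt (fine (mu D)) * Num.sqrt (\int[mu]_(x in D) (expR (f x) ^+ 2))].
Proof.
move=> if_ f0 nz.
have mf : measurable_fun D f by exact/measurable_EFinP/(measurable_int mu).
have mexpf : measurable_fun D (fun x => expR (f x)) by exact: measurableT_comp.
have iexpf2 : mu.-integrable D (EFin \o (fun x => expR (f x) ^+ 2)).
  apply: integrable_of_Rintegral_neq0 => //; first exact: measurable_funX.
split; [exact: iexpf2| |exact: Rintegral_le_sqrt_measure].
rewrite -[leLHS]addr0 -f0; apply: Rintegral_expR_ge => //.
exact: integrable_of_sqr.
Qed.

End FiniteMeasureIntegrals.

Section FundamentalDomain.
Variable R : realType.
Local Notation plane := (measurableTypeR R * measurableTypeR R)%type.
Variables om1 om2 : pt R.
Hypothesis basis : lattice_basis om1 om2.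

(* [fdom] is the preimage of [[0,1[^2] under the linear map that recovers the
   lattice coordinates (s, t) by Cramer's rule. *)
Lemma measurable_fdom : measurable (fdom om1 om2 : set plane).
Proof.
move: basis; rewrite /lattice_basis; set det := _ - _ => det_neq0.
pose s (x : pt R) := (x.1 * om2.2 - x.2 * om2.1) / det.
pose t (x : pt R) := (om1.1 * x.2 - om1.2 * x.1) / det.
have -> : fdom om1 om2 = s @^-1` `[0, 1[ `&` t @^-1` `[0, 1[.
  apply/seteqP; split => x /=.
  - move=> [a [b [ha hb ->]]]; rewrite /s /t /= !in_itv /=.
    have -> : ((a * om1.1 + b * om2.1) * om2.2 - (a * om1.2 + b * om2.2) * om2.1) / det = a.
      by rewrite /det; field.
    have -> : (om1.1 * (a * om1.2 + b * om2.2) - om1.2 * (a * om1.1 + b * om2.1)) / det = b.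
      by rewrite /det; field.
    by split.
  - rewrite /s /t /= !in_itv /= => -[hs ht]; exists (s x), (t x); split => //.
    by case: x {hs ht} => a b; rewrite /s /t /=; congr pair; rewrite /det; field.
have ms : measurable_fun setT s.
  apply: measurable_funM; last exact: measurable_cst.
  by apply: measurable_funB; apply: measurable_funM;
    first [exact: measurable_fst | exact: measurable_snd | exact: measurable_cst].
have mt : measurable_fun setT t.
  apply: measurable_funM; last exact: measurable_cst.
  by apply: measurable_funB; apply: measurable_funM;
    first [exact: measurable_fst | exact: measurable_snd | exact: measurable_cst].
by apply: measurableI; rewrite -[X in measurable X]setTI; [apply: ms|apply: mt].
Qed.

Lemma fdom_lty : (leb2 (fdom om1 om2) < +oo)%E.
Proof.
pose M := `|om1.1| + `|om2.1| + `|om1.2| + `|om2.2|.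
have fdom_sub : (fdom om1 om2 : set plane) `<=` `[- M, M] `*` `[- M, M].
  move=> x [s [t [/andP[s0 s1] /andP[t0 t1] ->]]]; rewrite /= !in_itv /= -!ler_norml.
  have hs : `|s| <= 1 by rewrite ger0_norm // ltW.
  have ht : `|t| <= 1 by rewrite ger0_norm // ltW.
  split; apply: (le_trans (ler_normD _ _)); rewrite !normrM /M.
  - have := ler_wpM2r (normr_ge0 om1.1) hs; have := ler_wpM2r (normr_ge0 om2.1) ht.
    have := normr_ge0 om1.2; have := normr_ge0 om2.2; lra.
  - have := ler_wpM2r (normr_ge0 om1.2) hs; have := ler_wpM2r (normr_ge0 om2.2) ht.
    have := normr_ge0 om1.1; have := normr_ge0 om2.1; lra.
have msquare : measurable (`[- M, M] `*` `[- M, M] : set plane).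
  by apply: measurableX; exact: measurable_itv.
apply: (le_lt_trans (le_measure _ _ _ fdom_sub)); rewrite ?inE //.
  exact: measurable_fdom.
have := @product_measure1E _ _ _ _ R (@lebesgue_measure R) (@lebesgue_measure R) _ _
  (measurable_itv `[- M, M]) (measurable_itv `[- M, M]).
rewrite /= => box_measure; rewrite /leb2 /= box_measure !lebesgue_measure_itv /=.
by case: ifP => _; rewrite ?mul0e ?ltry // -EFinM ltry.
Qed.

End FundamentalDomain.

Lemma expR_double_sum (R : realType) (a b : R) :
  expR (2 * a + 2 * b) = expR (a + b) ^+ 2.
Proof. by rewrite -expRM_natl; congr expR; ring. Qed.

Section TorusIntegrals.
Variables (R : realType) (om1 om2 : pt R).
Hypothesis basis : lattice_basis om1 om2.
Local Notation D := (fdom om1 om2).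
Local Notation mu := (@leb2 R).

Lemma intO_expR_bounds (u w : pt R -> R) :
  measurable_fun D u -> mu.-integrable D (fun x => (u x)%:E) -> intO om1 om2 u = 0 ->
  measurable_fun D w -> mu.-integrable D (fun x => (w x ^+ 2)%:E) ->
  intO om1 om2 w = 0 ->
  intO om1 om2 (fun x => expR (2 * u x + 2 * w x)) != 0 ->
  [/\ mu.-integrable D (EFin \o (fun x => expR (u x + w x) ^+ 2)),
      area om1 om2 <= intO om1 om2 (fun x => expR (u x + w x)) &
      intO om1 om2 (fun x => expR (u x + w x)) <=
        Num.sqrt (area om1 om2) *
        Num.sqrt (intO om1 om2 (fun x => expR (2 * u x + 2 * w x)))].
Proof.
move=> mu_ iu u0 mw iw2 w0.
have mD := measurable_fdom basis; have D_lty := fdom_lty basis.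
have iw : mu.-integrable D (EFin \o w) := integrable_of_sqr mD D_lty mw iw2.
have -> : intO om1 om2 (fun x => expR (2 * u x + 2 * w x)) =
          \int[mu]_(x in D) (expR (u x + w x) ^+ 2).
  by apply: eq_Rintegral => x _; exact: expR_double_sum.
move=> J_neq0.
apply: Rintegral_expR_bounds => //; first exact: (integrableD mD iu iw).
by rewrite RintegralD //; move: u0 w0; rewrite /intO => -> ->; rewrite addr0.
Qed.

Lemma E12_le_sqrt_J (u1 u2 w1 w2 : pt R -> R) :
  measurable_fun D u1 -> measurable_fun D w1 ->
  measurable_fun D u2 -> measurable_fun D w2 ->
  mu.-integrable D (EFin \o (fun x => expR (u1 x + w1 x) ^+ 2)) ->
  mu.-integrable D (EFin \o (fun x => expR (u2 x + w2 x) ^+ 2)) ->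
  E12 om1 om2 u1 u2 w1 w2 <=
    Num.sqrt (J1 om1 om2 u1 w1) * Num.sqrt (J2 om1 om2 u2 w2).
Proof.
move=> mu1 mw1 mu2 mw2 i1 i2.
have mexp (u w : pt R -> R) : measurable_fun D u -> measurable_fun D w ->
    measurable_fun D (fun x => expR (u x + w x)).
  by move=> mu_ mw; apply: measurableT_comp => //; exact: measurable_funD.
have -> : E12 om1 om2 u1 u2 w1 w2 =
    \int[mu]_(x in D) (expR (u1 x + w1 x) * expR (u2 x + w2 x)).
  by apply: eq_Rintegral => x _; rewrite -expRD; congr expR; ring.
have eJ (u w : pt R -> R) : intO om1 om2 (fun x => expR (2 * u x + 2 * w x)) =
    \int[mu]_(x in D) (expR (u x + w x) ^+ 2).
  by apply: eq_Rintegral => x _; exact: expR_double_sum.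
rewrite /J1 /J2 !eJ.
apply: (Rintegral_cauchy_schwarz (measurable_fdom basis)) => //.
- exact: mexp.
- exact: mexp.
Qed.

End TorusIntegrals.

Lemma b1_ge0 (R : realType) (N : nat) (kappa : R) (n1 n2 : nat) :
  (1 <= N)%N -> 1 <= kappa -> 0 <= b1 N kappa n1 n2.
Proof.
move=> N_ge1 k_ge1; have : (1 : R) <= N%:R by rewrite ler1n.
rewrite /b1 => ?; apply: divr_ge0; last lra.
rewrite mulr_ge0 ?mulr_ge0 ?pi_ge0 // addr_ge0 // mulr_ge0 //; first nra; lra.
Qed.

Lemma b2_ge0 (R : realType) (N : nat) (kappa : R) (n1 n2 : nat) :
  (1 <= N)%N -> 1 <= kappa -> 0 <= b2 N kappa n1 n2.
Proof.
move=> N_ge1 k_ge1; have : (1 : R) <= N%:R by rewrite ler1n.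
rewrite /b2 => ?; apply: divr_ge0; last nra.
rewrite mulr_ge0 ?mulr_ge0 ?pi_ge0 // addr_ge0 // mulr_ge0 //; first nra; lra.
Qed.

Section Roots.
Variables (R : realType) (N : nat) (kappa lambda : R) (om1 om2 : pt R) (n1 n2 : nat).
Variables (u10 u20 w1 w2 : pt R -> R).

(* [f1] and [f2] divide by [J1] and [J2], and [x / 0 = 0]. *)
Lemma J1_gt0_of_f1 (X Y : R) :
  X = f1 N kappa lambda om1 om2 n1 n2 u10 u20 w1 w2 Y -> 0 < X -> 0 < J1 om1 om2 u10 w1.
Proof.
move=> -> f_gt0; rewrite lt_def Rintegral_ge0 ?andbT => [|x _]; last exact: expR_ge0.
by apply: contraTneq f_gt0 => J0; rewrite /f1 J0 !mulr0 invr0 mulr0 ltxx.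
Qed.

Lemma J2_gt0_of_f2 (X Y : R) :
  Y = f2 N kappa lambda om1 om2 n1 n2 u10 u20 w1 w2 X -> 0 < Y -> 0 < J2 om1 om2 u20 w2.
Proof.
move=> -> f_gt0; rewrite lt_def Rintegral_ge0 ?andbT => [|x _]; last exact: expR_ge0.
by apply: contraTneq f_gt0 => J0; rewrite /f2 J0 !mulr0 invr0 mulr0 ltxx.
Qed.

Lemma f1_le (Y : R) : (2 <= N)%N -> 1 < kappa -> 0 < lambda ->
  0 <= I1 om1 om2 u10 w1 -> 0 <= E12 om1 om2 u10 u20 w1 w2 -> 0 <= Y ->
  0 < J1 om1 om2 u10 w1 ->
  (N%:R - 1 + kappa) * J1 om1 om2 u10 w1 * f1 N kappa lambda om1 om2 n1 n2 u10 u20 w1 w2 Y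
    <= P1 N kappa om1 om2 u10 u20 w1 w2 Y.
Proof.
move=> N_ge2 k_gt1 l_gt0 I_ge0 E_ge0 Y_ge0 J_gt0.
have N_gt1 : 1 < N%:R :> R by rewrite ltr1n.
have b_ge0 := b1_ge0 n1 n2 (ltnW N_ge2) (ltW k_gt1).
apply: (mul_larger_root_le _ J_gt0 _ _ (erefl _)).
- lra.
- by rewrite /P1 addr_ge0 ?mulr_ge0 //; lra.
- apply: mulr_ge0 (ltW J_gt0); apply: divr_ge0 (ltW l_gt0).
  by apply: mulr_ge0 b_ge0; lra.
Qed.

Lemma f2_le (X : R) : (2 <= N)%N -> 1 < kappa -> 0 < lambda ->
  0 <= I2 om1 om2 u20 w2 -> 0 <= E12 om1 om2 u10 u20 w1 w2 -> 0 <= X ->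
  0 < J2 om1 om2 u20 w2 ->
  ((N%:R - 1)^-1 + kappa) * J2 om1 om2 u20 w2 *
    f2 N kappa lambda om1 om2 n1 n2 u10 u20 w1 w2 X
    <= P2 N kappa om1 om2 u10 u20 w1 w2 X.
Proof.
move=> N_ge2 k_gt1 l_gt0 I_ge0 E_ge0 X_ge0 J_gt0.
have N_gt1 : 1 < N%:R :> R by rewrite ltr1n.
have b_ge0 := b2_ge0 n1 n2 (ltnW N_ge2) (ltW k_gt1).
apply: (mul_larger_root_le _ J_gt0 _ _ (erefl _)).
- by rewrite addr_gt0 ?invr_gt0; lra.
- by rewrite /P2 addr_ge0 ?mulr_ge0 ?invr_ge0 //; lra.
- apply: mulr_ge0 (ltW J_gt0); apply: divr_ge0; last by apply: mulr_ge0; lra.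
  by apply: mulr_ge0 b_ge0; apply: mulr_ge0; nra.
Qed.

End Roots.

Theorem lemma2 (R : realType) (N : nat) (kappa lambda : R) (om1 om2 : pt R)
    (n1 n2 : nat) (p1 : 'I_n1 -> pt R) (p2 : 'I_n2 -> pt R)
    (u10 u20 w1 w2 : pt R -> R) (c1 c2 : R) :
  (2 <= N)%N -> 1 < kappa -> 0 < lambda ->
  lattice_basis om1 om2 ->
  (forall s, fdom om1 om2 (p1 s)) -> (forall s, fdom om1 om2 (p2 s)) ->
  is_u0 om1 om2 p1 u10 -> is_u0 om1 om2 p2 u20 ->
  in_A N kappa lambda om1 om2 n1 n2 u10 u20 w1 w2 ->
  is_c N kappa lambda om1 om2 n1 n2 u10 u20 w1 w2 c1 c2 ->
  [/\ expR c1 * I1 om1 om2 u10 w1 <= area om1 om2, expR c1 <= 1,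
      expR c2 * I2 om1 om2 u20 w2 <= area om1 om2 & expR c2 <= 1].
Proof.
move=> N_ge2 k_gt1 l_gt0 basis _ _ [_ [mu10 [iu10 [zu10 _]]]] [_ [mu20 [iu20 [zu20 _]]]].
move=> [[[[_ [mw1 iw1]] _] zw1] [[[[_ [mw2 iw2]] _] zw2] _]] [hX hY].
have n_ge2 : (2 : R) <= N%:R by rewrite (ler_nat R 2 N).
have [X_gt0 Y_gt0] := (expR_gt0 c1, expR_gt0 c2).
have J1_gt0 := J1_gt0_of_f1 hX X_gt0; have J2_gt0 := J2_gt0_of_f2 hY Y_gt0.
have [iJ1 A_le_I1 I1_le] := intO_expR_bounds basis mu10 iu10 zu10 mw1 iw1 zw1 (lt0r_neq0 J1_gt0).
have [iJ2 A_le_I2 I2_le] := intO_expR_bounds basis mu20 iu20 zu20 mw2 iw2 zw2 (lt0r_neq0 J2_gt0).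
have E_le := E12_le_sqrt_J basis mu10 mw1 mu20 mw2 iJ1 iJ2.
have A_ge0 : 0 <= area om1 om2 by rewrite fine_ge0 ?measure_ge0.
have E_ge0 : 0 <= E12 om1 om2 u10 u20 w1 w2 by apply: Rintegral_ge0 => x _; exact: expR_ge0.
have [I1_ge0 I2_ge0] := (le_trans A_ge0 A_le_I1, le_trans A_ge0 A_le_I2).
have root1 := f1_le n1 n2 N_ge2 k_gt1 l_gt0 I1_ge0 E_ge0 (ltW Y_gt0) J1_gt0.
have root2 := f2_le n1 n2 N_ge2 k_gt1 l_gt0 I2_ge0 E_ge0 (ltW X_gt0) J2_gt0.
rewrite -hX in root1; rewrite -hY in root2.
have [s1 s2] := coupled_roots_le n_ge2 k_gt1 A_ge0 J1_gt0 J2_gt0 E_ge0 (ltW X_gt0)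
  (ltW Y_gt0) I1_le I2_le E_le root1 root2.
have [? ?] := mul_le_and_le1_of_sqrt_le A_ge0 J1_gt0 X_gt0 I1_le s1 A_le_I1.
by have [? ?] := mul_le_and_le1_of_sqrt_le A_ge0 J2_gt0 Y_gt0 I2_le s2 A_le_I2.
Qed.
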